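(* Let $k\ge 2$ and $n=r+m(k+1)$ with integers $m\ge 0$ and $r\in\{0,1,\ldots,k\}$. Then: (i) if $r=0$, $L_n^{(k)}\equiv 2(-1)^m\pmod{2^{k-2}}$; (ii) if $r=1$, $L_n^{(k)}\equiv (4m+1)(-1)^m\pmod{2^{k-1}}$; (iii) if $r=2$, $L_n^{(k)}\equiv (4m^2+6m+3)(-1)^m\pmod{2^{k}}$; (iv) if $r\ge 3$, $$L_n^{(k)}\equiv (-1)^m2^{r-2}\left(4\left(\binom{m+r+1}{m}-\binom{m+r-1}{m-2}\right)-\left(\binom{m+r}{m}-\binom{m+r-2}{m-2}\right)\right)\pmod{2^{k+r-2}}.$$
   Context: For an integer $k\ge 2$, the $k$-Lucas sequence $\{L_n^{(k)}\}_{n\in\mathbb{Z}}$ is defined by $L_{2-k}^{(k)}=\cdots=L_{-1}^{(k)}=0$, $L_0^{(k)}=2$, $L_1^{(k)}=1$, and $L_n^{(k)}=L_{n-1}^{(k)}+\cdots+L_{n-k}^{(k)}$. Convention: $\binom{a}{b}=0$ if $a<b$ or if $a$ or $b$ is negative. *)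

From mathcomp Require Import all_boot all_order all_algebra.
Set Implicit Arguments. Unset Strict Implicit. Unset Printing Implicit Defensive.
Import Order.TTheory GRing.Theory Num.Theory.

(* k-Lucas sequence. [lucas_win k n] is the window
   [:: L_n; L_{n-1}; ...; L_{n-k+1}] (size k), where indices in 2-k..-1 give 0.
   L_0 = 2, L_1 = 1, and for n >= 2, L_n = L_{n-1} + ... + L_{n-k}. *)
Fixpoint lucas_win (k n : nat) : seq nat :=
  match n with
  | 0 => 2 :: nseq k.-1 0
  | n'.+1 =>
      let w := lucas_win k n' in
      (if n' is 0 then 1 else sumn w) :: take k.-1 w
  end.

Definition lucas (k n : nat) : nat := head 0 (lucas_win k n).

(* Binomial coefficient on integers with the convention C(a,b) = 0
   if a < b or a or b negative. *)
Definition binZ (a b : int) : int :=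
  if (0 <= b)%R && (b <= a)%R then Posz (binomial `|a|%N `|b|%N) else 0%R.

From mathcomp Require Import all_boot all_order all_algebra.
From mathcomp Require Import zify ring.
Import Order.TTheory GRing.Theory Num.Theory.
Local Open Scope ring_scope.

(* Multiplying numerator and denominator of sum_n L_n x^n = (2 - x) / (1 - x - ... - x^k)
   by 1 - x gives (2 - 3x + x^2) / (1 - 2x + x^(k+1)), hence
   L_n = 2 a_n - 3 a_(n-1) + a_(n-2) where a_(n+1) = 2 a_n - a_(n-k).  An induction
   on m and then on r, through this recursion and Pascal's rule, shows
   a_(r + m(k+1)) = (-1)^m C(m+r, m) 2^r modulo 2^(r+k+1) for r <= k.  Substituting
   into the formula for L_n gives each case of the theorem, even modulo one more
   power of 2 than stated; in case (iv) the binomial combination of the statement is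
   rewritten by Pascal's rule. *)

Lemma binZ_nat (a b : nat) : binZ a b = 'C(a, b).
Proof.
rewrite /binZ; case: ifP => // /negbT.
by rewrite negb_and => /orP[|] h; rewrite bin_small //; lia.
Qed.

Lemma binZ_neg (a b : int) : b < 0 -> binZ a b = 0.
Proof. by rewrite /binZ => b_lt0; case: ifP => // /andP[b_ge0 _]; lia. Qed.

Lemma binZS (a b : int) : 0 <= a -> binZ (a + 1) (b + 1) = binZ a b + binZ a (b + 1).
Proof.
case: a => // a _; case: b => [b|[|b]].
- by rewrite -!PoszD !binZ_nat !addn1 binS addrC.
- by rewrite (_ : Negz 0 + 1 = 0) // (@binZ_neg a) // add0r -PoszD !binZ_nat !bin0.
- by rewrite !binZ_neg.
Qed.

Lemma binZ_combinationE (N M : int) : 2 <= N ->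
  4 * (binZ (N + 1) M - binZ (N - 1) (M - 2)) - (binZ N M - binZ (N - 2) (M - 2))
  = 8 * binZ N M - 6 * binZ (N - 1) M + binZ (N - 2) M.
Proof.
move=> N_ge2.
have pascal (a b : int) : 0 <= a -> binZ (a + 1) b = binZ a (b - 1) + binZ a b.
  by move=> a_ge0; rewrite -{1}(subrK 1 b) binZS // subrK.
have [P P_ge0 ->] : exists2 P, 0 <= P & N = P + 1 + 1.
  by exists (N - 2); [lia | ring].
rewrite (_ : P + 1 + 1 - 1 = P + 1); last by ring.
rewrite (_ : P + 1 + 1 - 2 = P); last by ring.
rewrite (_ : M - 2 = M - 1 - 1); last by ring.
do 7 (rewrite pascal; last lia).
ring.
Qed.

Lemma binSSn_double n : ('C(n.+2, n) * 2 = n.+2 * n.+1)%N.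
Proof. by elim: n => [|n IH] //; rewrite binS binSn; nia. Qed.

Lemma dvdz_exp_le {p x : int} {e' : nat} e :
  (p ^+ e' %| x)%Z -> (e <= e')%N -> (p ^+ e %| x)%Z.
Proof. by move=> dvd_x le_ee'; apply: dvdz_trans (dvdz_exp2l p le_ee') dvd_x. Qed.

Lemma PoszX (a e : nat) : (a ^ e)%N%:Z = a%:Z ^+ e.
Proof. by rewrite -!natz natrX. Qed.

Lemma eqz_mod_exp2 {e e' : nat} {x y : int} :
  (2 ^+ e' %| x - y)%Z -> (e <= e')%N -> (x = y %[mod (2 ^ e)%N%:Z])%Z.
Proof.
move=> dvd_xy le_ee'; apply/eqP.
by rewrite eqz_mod_dvd PoszX (dvdz_exp_le _ dvd_xy).
Qed.

(* [acoef k i] is the coefficient a_i of x^i in 1 / (1 - 2x + x^(k+1)), so that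
   a_i = 0 for i < 0, a_0 = 1 and a_(n+1) = 2 a_n - a_(n-k); [acoef_hist k n]
   lists a_n, ..., a_0, which makes the recursion structural. *)
Fixpoint acoef_hist (k n : nat) : seq int :=
  if n is n'.+1 then
    let h := acoef_hist k n' in (2 * head 0 h - nth 0 h k) :: h
  else [:: 1].

Definition acoef (k : nat) (i : int) : int :=
  if i is Posz n then head 0 (acoef_hist k n) else 0.

Lemma acoef_neg k i : i < 0 -> acoef k i = 0.
Proof. by case: i. Qed.

Lemma nth_acoef_hist k n j : nth 0 (acoef_hist k n) j = acoef k (n%:Z - j%:Z).
Proof.
elim: n j => [|n IH] [|j] //=; rewrite ?nth_nil ?addn0 //.
by rewrite IH; congr (acoef k); lia.
Qed.

Lemma acoefS k n : acoef k n.+1 = 2 * acoef k n - acoef k (n%:Z - k%:Z).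
Proof. by rewrite /= nth_acoef_hist. Qed.

Lemma acoef_small k n : (n <= k)%N -> acoef k n = 2 ^+ n.
Proof.
elim: n => [|n IH] n_lt_k //.
by rewrite acoefS IH ?acoef_neg ?subr0 -?exprS //; lia.
Qed.

Lemma acoef_cong (k m : nat) {r : nat} : (r <= k)%N ->
  (2 ^+ (r + k + 1) %| acoef k (r + m * (k + 1))%N
                      - (-1) ^+ m * 'C(m + r, m)%:Z * 2 ^+ r)%Z.
Proof.
elim: m r => [|m IHm] r.
  by move=> r_le_k; rewrite mul0n addn0 acoef_small // bin0 !mul1r subrr.
elim: r => [|r IHr] r_le_k.
  rewrite (_ : 0 + m.+1 * (k + 1) = (k + m * (k + 1)).+1)%N; last lia.
  rewrite acoefS (_ : _ - k%:Z = (0 + m * (k + 1))%N); last lia.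
  move: (IHm k (leqnn k)) (IHm 0%N (leq0n k)).
  set a := acoef k _; set a' := acoef k _; set c := (-1) ^+ m * _.
  move=> a_cong a'_cong.
  have -> : 2 * a - a' - (-1) ^+ m.+1 * 'C(m.+1 + 0, m.+1)%:Z * 2 ^+ 0 =
      2 * (a - c * 2 ^+ k) - (a' - (-1) ^+ m * 'C(m + 0, m)%:Z * 2 ^+ 0)
      + c * 2 ^+ (k + 1).
    by rewrite !addn0 !binn exprD exprS; ring.
  apply: rpredD; first apply: rpredB.
  - by rewrite dvdz_mull // (dvdz_exp_le _ a_cong); lia.
  - exact: a'_cong.
  - by rewrite add0n dvdz_mull.
rewrite (_ : r.+1 + m.+1 * (k + 1) = (r + m.+1 * (k + 1)).+1)%N; last lia.
rewrite acoefS (_ : _ - k%:Z = (r.+1 + m * (k + 1))%N); last lia.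
move: (IHr (ltnW r_le_k)) (IHm r.+1 r_le_k).
set a := acoef k _; set a' := acoef k _.
move=> a_cong a'_cong.
rewrite !addSn !addnS in a_cong a'_cong *; rewrite binS PoszD.
set x := (-1) ^+ m.+1 * _ * _ in a_cong; set y := (-1) ^+ m * _ * _ in a'_cong.
have -> : 2 * a - a' - (-1) ^+ m.+1 * ('C((m + r).+1, m.+1)%:Z + 'C((m + r).+1, m)%:Z)
            * 2 ^+ r.+1 = 2 * (a - x) - (a' - y).
  by rewrite /x /y !exprS; ring.
by rewrite rpredB // exprS dvdz_mul.
Qed.

Lemma dvdz_acoef (k m : nat) {r : nat} :
  (r <= k)%N -> (2 ^+ r %| acoef k (r + m * (k + 1))%N)%Z.
Proof.
move=> r_le_k; rewrite -(subrK ((-1) ^+ m * 'C(m + r, m)%:Z * 2 ^+ r) (acoef k _)).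
rewrite rpredD ?dvdz_mull // (dvdz_exp_le _ (acoef_cong k m r_le_k)) //.
by rewrite -addnA leq_addr.
Qed.

Lemma size_lucas_win k n : (0 < k)%N -> size (lucas_win k n) = k.
Proof.
move=> k_gt0; elim: n => [|n IH] /=; first by rewrite size_nseq prednK.
by rewrite size_takel ?IH ?prednK //; lia.
Qed.

Lemma nth_lucas_win k n i : (i < k)%N ->
  nth 0%N (lucas_win k n) i = if (i <= n)%N then lucas k (n - i) else 0%N.
Proof.
elim: n i => [|n IH] [|i] i_lt_k //=.
- by rewrite nth_nseq; case: ifP.
- by rewrite nth_take ?IH ?subSS //; lia.
Qed.

Section LucasSequence.

Context {k : nat} (k_ge2 : (2 <= k)%N).

Lemma lucas_rec n : (lucas k n.+3)%:Z =
  2 * (lucas k n.+2)%:Z - (if (k <= n.+2)%N then (lucas k (n.+2 - k))%:Z else 0).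
Proof.
have -> : lucas k n.+3 = (lucas k n.+2 + sumn (take k.-1 (lucas_win k n.+1)))%N
  by [].
have -> : lucas k n.+2 = sumn (lucas_win k n.+1) by [].
set w := lucas_win k n.+1.
have size_w : size w = k by rewrite size_lucas_win //; lia.
have -> : sumn w = (sumn (take k.-1 w) + nth 0%N w k.-1)%N.
  rewrite -{1}(cat_take_drop k.-1 w) sumn_cat (drop_nth 0%N) ?size_w; last lia.
  by rewrite drop_oversize ?size_w /=; lia.
rewrite nth_lucas_win; last lia.
case: ifP => c1; case: ifP => c2; try lia.
by rewrite (_ : n.+1 - k.-1 = n.+2 - k)%N; lia.
Qed.

Lemma lucas_acoef n : (lucas k n)%:Z =
  2 * acoef k n - 3 * acoef k (n%:Z - 1) + acoef k (n%:Z - 2).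
Proof.
elim/ltn_ind: n => -[|[|[|n]]] IH //.
- by rewrite (@acoef_small k 1) //; lia.
- rewrite (@acoef_small k 2) // (@acoef_small k 1); last lia.
  case: k k_ge2 {IH} => [|[|j]] // _.
  rewrite /lucas /= (_ : 0 :: nseq j 0 = nseq j.+1 0%N) //.
  by rewrite take_nseq // sumn_nseq mul0n.
rewrite lucas_rec IH //.
have -> : n.+2%:Z - 2 = n by lia.
have -> : n.+3%:Z - 1 = n.+2 by [].
have -> : n.+3%:Z - 2 = n.+1 by [].
rewrite (acoefS k n.+2) (acoefS k n.+1) (acoefS k n).
case: ifP => [k_le | k_gt]; last first.
  by rewrite !(@acoef_neg k (_ - k%:Z)); try lia; ring.
rewrite IH; last lia.
have -> : Posz (n.+2 - k)%N = n.+2%:Z - k%:Z by lia.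
have -> : n.+2%:Z - k%:Z - 1 = n.+1%:Z - k%:Z by lia.
have -> : n.+2%:Z - k%:Z - 2 = n%:Z - k%:Z by lia.
ring.
Qed.

Lemma lucas_congSS s m : (s.+2 <= k)%N ->
  (2 ^+ (s + k + 1) %| (lucas k (s.+2 + m * (k + 1)))%:Z
     - (-1) ^+ m * 2 ^+ s
       * (8 * 'C(m + s.+2, m)%:Z - 6 * 'C(m + s.+1, m)%:Z + 'C(m + s, m)%:Z))%Z.
Proof.
move=> s_le_k; rewrite lucas_acoef.
have -> : (s.+2 + m * (k + 1))%N%:Z - 1 = (s.+1 + m * (k + 1))%N by lia.
have -> : (s.+2 + m * (k + 1))%N%:Z - 2 = (s + m * (k + 1))%N by lia.
move: (acoef_cong k m s_le_k) (acoef_cong k m (ltnW s_le_k))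
      (acoef_cong k m (ltnW (ltnW s_le_k))).
set a2 := acoef k (s.+2 + _)%N; set a1 := acoef k (s.+1 + _)%N.
set a0 := acoef k (s + _)%N.
set c0 := _ * 2 ^+ s; set c1 := _ * 2 ^+ s.+1; set c2 := _ * 2 ^+ s.+2.
move=> a2_cong a1_cong a0_cong.
have -> : 2 * a2 - 3 * a1 + a0 - (-1) ^+ m * 2 ^+ s * (8 * 'C(m + s.+2, m)%:Z
    - 6 * 'C(m + s.+1, m)%:Z + 'C(m + s, m)%:Z)
    = 2 * (a2 - c2) - 3 * (a1 - c1) + (a0 - c0).
  by rewrite /c0 /c1 /c2 !exprS; ring.
apply: rpredD; last exact: a0_cong.
by rewrite rpredB ?dvdz_mull // (dvdz_exp_le _ a2_cong, dvdz_exp_le _ a1_cong); lia.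
Qed.

Lemma lucas_cong0 m :
  (2 ^+ k.-1 %| (lucas k (m.+1 * (k + 1)))%:Z - 2 * (-1) ^+ m.+1)%Z.
Proof.
rewrite lucas_acoef.
have -> : (m.+1 * (k + 1))%N%:Z - 1 = (k + m * (k + 1))%N by lia.
have -> : (m.+1 * (k + 1))%N%:Z - 2 = (k.-1 + m * (k + 1))%N by lia.
have := acoef_cong k m.+1 (leq0n k); rewrite !add0n addn0 binn expr0 !mulr1.
set a := acoef k _ => a_cong.
have -> : 2 * a - 3 * acoef k (k + m * (k + 1))%N + acoef k (k.-1 + m * (k + 1))%N
    - 2 * (-1) ^+ m.+1
    = 2 * (a - (-1) ^+ m.+1) - 3 * acoef k (k + m * (k + 1))%N
      + acoef k (k.-1 + m * (k + 1))%N by ring.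
rewrite rpredD ?rpredB ?dvdz_mull ?dvdz_acoef ?leq_pred //.
  by rewrite (dvdz_exp_le _ a_cong); lia.
by rewrite (dvdz_exp_le _ (dvdz_acoef k m (leqnn k))) ?leq_pred.
Qed.

Lemma lucas_cong1 m :
  (2 ^+ k %| (lucas k (1 + m.+1 * (k + 1)))%:Z - (4 * m.+1%:Z + 1) * (-1) ^+ m.+1)%Z.
Proof.
rewrite lucas_acoef.
have -> : (1 + m.+1 * (k + 1))%N%:Z - 1 = (0 + m.+1 * (k + 1))%N by lia.
have -> : (1 + m.+1 * (k + 1))%N%:Z - 2 = (k + m * (k + 1))%N by lia.
have := acoef_cong k m.+1 (leq0n k); rewrite addn0 binn expr0 !mulr1.
have := acoef_cong k m.+1 (ltnW k_ge2); rewrite (addn1 m.+1) binSn expr1.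
set a1 := acoef k (1 + _)%N; set a0 := acoef k (0 + _)%N => a1_cong a0_cong.
have -> : 2 * a1 - 3 * a0 + acoef k (k + m * (k + 1))%N
    - (4 * m.+1%:Z + 1) * (-1) ^+ m.+1
    = 2 * (a1 - (-1) ^+ m.+1 * m.+2%:Z * 2) - 3 * (a0 - (-1) ^+ m.+1)
      + acoef k (k + m * (k + 1))%N.
  by rewrite !intS; ring.
rewrite rpredD ?rpredB ?dvdz_mull ?(dvdz_acoef k m (leqnn k)) //.
  by rewrite (dvdz_exp_le _ a1_cong); lia.
by rewrite (dvdz_exp_le _ a0_cong); lia.
Qed.

Lemma lucas_cong2 m :
  (2 ^+ (k + 1) %| (lucas k (2 + m * (k + 1)))%:Z
                   - (4 * m%:Z ^+ 2 + 6 * m%:Z + 3) * (-1) ^+ m)%Z.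
Proof.
have -> : (4 * m%:Z ^+ 2 + 6 * m%:Z + 3) * (-1) ^+ m = (-1) ^+ m * 2 ^+ 0
    * (8 * 'C(m + 2, m)%:Z - 6 * 'C(m + 1, m)%:Z + 'C(m + 0, m)%:Z).
  rewrite addn0 binn addn1 binSn addn2 expr0 mulr1 mulrC; congr (_ * _).
  by have := binSSn_double m; rewrite expr2; nia.
exact: lucas_congSS.
Qed.

Lemma lucas_cong_ge3 m {r : nat} : (3 <= r)%N -> (r <= k)%N ->
  (2 ^+ (r + k - 1) %| (lucas k (r + m * (k + 1)))%:Z
     - (-1) ^+ m * 2 ^+ (r - 2) *
       (4 * (binZ (m%:Z + r%:Z + 1) m%:Z - binZ (m%:Z + r%:Z - 1) (m%:Z - 2))
        - (binZ (m%:Z + r%:Z) m%:Z - binZ (m%:Z + r%:Z - 2) (m%:Z - 2))))%Z.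
Proof.
case: r => [|[|[|s]]] // _ r_le_k.
rewrite binZ_combinationE; last lia.
rewrite (_ : m%:Z + s.+3%:Z - 1 = (m + s.+2)%N); last lia.
rewrite (_ : m%:Z + s.+3%:Z - 2 = (m + s.+1)%N); last lia.
rewrite -PoszD !binZ_nat (_ : (s.+3 + k - 1 = s.+1 + k + 1)%N); last lia.
exact: lucas_congSS.
Qed.

End LucasSequence.

Theorem lemma3p1 (k m r : nat) :
  (2 <= k)%N -> (r <= k)%N ->
  let n := (r + m * (k + 1))%N in
  [/\ (r = 0%N ->
        ((lucas k n)%:Z = 2 * (-1) ^+ m %[mod (2 ^ (k - 2))%N%:Z])%Z),
      (r = 1%N ->
        ((lucas k n)%:Z = (4 * m%:Z + 1) * (-1) ^+ m %[mod (2 ^ (k - 1))%N%:Z])%Z),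
      (r = 2%N ->
        ((lucas k n)%:Z = (4 * m%:Z ^+ 2 + 6 * m%:Z + 3) * (-1) ^+ m
           %[mod (2 ^ k)%N%:Z])%Z) &
      ((3 <= r)%N ->
        ((lucas k n)%:Z =
           (-1) ^+ m * (2 ^ (r - 2))%N%:Z *
           (4 * (binZ (m%:Z + r%:Z + 1) m%:Z - binZ (m%:Z + r%:Z - 1) (m%:Z - 2))
            - (binZ (m%:Z + r%:Z) m%:Z - binZ (m%:Z + r%:Z - 2) (m%:Z - 2)))
           %[mod (2 ^ (k + r - 2))%N%:Z])%Z)].
Proof.
move=> k_ge2 r_le_k n; rewrite {}/n; split=> [-> | -> | -> | r_ge3].
- rewrite add0n; case: m => [|m]; first by rewrite expr0.
  by apply: eqz_mod_exp2 (lucas_cong0 k_ge2 m) _; lia.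
- case: m => [|m]; first by rewrite expr0.
  by apply: eqz_mod_exp2 (lucas_cong1 k_ge2 m) _; lia.
- exact: eqz_mod_exp2 (lucas_cong2 k_ge2 m) (leq_addr 1 k).
- rewrite [(2 ^ (r - 2))%N%:Z]PoszX.
  by apply: eqz_mod_exp2 (lucas_cong_ge3 k_ge2 m r_ge3 r_le_k) _; lia.
Qed.
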